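(* Under the Setting, Algorithm and Strong convexity assumption in the context (with $a_k\in(0,1]$, $A_k>0$), suppose $$\min_{\{\mathcal A\subset I:\,|\mathcal A|=\lceil (N-s+1)/2\rceil\}}\sum_{k\in\mathcal A}\rho_k\eta_k>\frac{(1-a_s)D_{\mathcal X}^2}{A_s}+\frac12\sum_{k\in\mathcal B}\rho_k\gamma_kL_f^2+\frac12\sum_{k\in\mathcal N}\rho_k\gamma_kL_{g,\mathcal X}^2.$$ Then $\mathcal B\neq\emptyset$, and either (i) $|\mathcal B|\ge(N-s+1)/2$ or (ii) $\sum_{k\in\mathcal B}\rho_k(f(x_k)-f(x^* ))<0$.
   Context: Setting. $\mathcal X\subset\mathbb R^n$ is convex and compact; $f:\mathcal X\to\mathbb R$ is convex and $L_f$-Lipschitz; $\Delta\subset\mathbb R^d$ is compact; $g:\mathcal X\times\Delta\to\mathbb R$ is such that for every $\delta\in\Delta$, $x\mapsto g(x,\delta)$ is convex and $L_{g,\mathcal X}$-Lipschitz, and for every $x\in\mathcal X$, $\delta\mapsto g(x,\delta)$ is $L_{g,\Delta}$-Lipschitz. Let $G(x):=\max_{\delta\in\Delta}g(x,\delta)$ and assume the problem $\min_{x\in\mathcal X}\{f(x):G(x)\le0\}$ has an optimal solution $x^*$. Norms are Euclidean. $f'(x)$ denotes a subgradient of $f$ at $x$ and $g'(x,\delta)$ a subgradient of $g(\cdot,\delta)$ at $x$. Let $\omega_{\mathcal X}:\mathcal X\to\mathbb R$ be continuously differentiable and $1$-strongly convex; $V(x,z):=\omega_{\mathcal X}(z)-\omega_{\mathcal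 X}(x)-\langle\nabla\omega_{\mathcal X}(x),z-x\rangle$; prox-mapping $P_{x,\mathcal X}(y):=\arg\min_{z\in\mathcal X}\{\langle y,z\rangle+V(x,z)\}$; $D_{\mathcal X}:=\sqrt{\max_{x,z\in\mathcal X}V(x,z)}$. Algorithm (inexact CSA). Inputs: $N\ge1$, $x_1\in\mathcal X$, tolerances $\eta_k>0$, step-sizes $\gamma_k>0$. For $k=1,\dots,N$: choose some $\delta_k\in\Delta$ (an approximate maximizer of $g(x_k,\cdot)$); set $h_k=f'(x_k)$ if $g(x_k,\delta_k)\le\eta_k$ and $h_k=g'(x_k,\delta_k)$ otherwise; set $x_{k+1}=P_{x_k,\mathcal X}(\gamma_kh_k)$. For $1\le s\le N$ let $I=\{s,\dots,N\}$, $\mathcal B:=\{k\in I: g(x_k,\delta_k)\le\eta_k\}$, $\mathcal N:=I\setminus\mathcal B$. Strong convexity assumption: $f$ is strongly convex with parameter $\mu_f>0$ (i.e. $f(x)\ge f(z)+\langle f'(z),x-z\rangle+\frac{\mu_f}{2}\|x-z\|^2$), each $g(\cdot,\delta)$ is strongly convex with parameter $\mu_g>0$ uniformly in $\delta$, and there is $L>0$ with $V(x,z)\le\frac L2\|x-z\|^2$ for all $x,z\in\mathcal X$. Define $a_k=\mu_f\gamma_k/L$ if $g(x_k,\delta_k)\le\eta_k$ and $a_k=\mu_g\gamma_k/L$ otherwise; $A_1=1$, $A_k=(1-a_k)A_{k-1}$ for $k\ge2$; $\rho_k=\gamma_k/A_k$. *)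

From Stdlib Require Import Reals Lra List.
Open Scope R_scope.

(* Points of R^n are represented as functions nat -> R; a point "lies in R^n"
   when all coordinates of index >= n vanish.  Inner product / norm use the
   first n coordinates (Euclidean). *)
Definition vec := nat -> R.
Definition vsub (x y : vec) : vec := fun i => x i - y i.
Definition vscale (c : R) (x : vec) : vec := fun i => c * x i.
Definition vcomb (t : R) (x y : vec) : vec := fun i => t * x i + (1 - t) * y i.
Definition inner (n : nat) (x y : vec) : R :=
  fold_right (fun i acc => x i * y i + acc) 0 (seq 0 n).
Definition vnorm (n : nat) (x : vec) : R := sqrt (inner n x x).
Definition inRn (n : nat) (x : vec) : Prop := forall i, (n <= i)%nat -> x i = 0.

Definition convex_set (S : vec -> Prop) : Prop :=
  forall x y t, S x -> S y -> 0 <= t <= 1 -> S (vcomb t x y).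
Definition bounded_set (n : nat) (S : vec -> Prop) : Prop :=
  exists M, forall x, S x -> vnorm n x <= M.
Definition closed_set (n : nat) (S : vec -> Prop) : Prop :=
  forall (u : nat -> vec) (y : vec), (forall k, S (u k)) -> inRn n y ->
    Un_cv (fun k => vnorm n (vsub (u k) y)) 0 -> S y.
Definition compact_set (n : nat) (S : vec -> Prop) : Prop :=
  (forall x, S x -> inRn n x) /\ bounded_set n S /\ closed_set n S.

Definition convex_on (S : vec -> Prop) (F : vec -> R) : Prop :=
  forall x y t, S x -> S y -> 0 <= t <= 1 ->
    F (vcomb t x y) <= t * F x + (1 - t) * F y.
Definition lipschitz_on (n : nat) (S : vec -> Prop) (F : vec -> R) (Lc : R) : Prop :=
  forall x y, S x -> S y -> Rabs (F x - F y) <= Lc * vnorm n (vsub x y).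
Definition strongly_convex_on (n : nat) (S : vec -> Prop) (F : vec -> R) (mu : R) : Prop :=
  forall x y t, S x -> S y -> 0 <= t <= 1 ->
    F (vcomb t x y) <= t * F x + (1 - t) * F y
                        - mu / 2 * t * (1 - t) * (vnorm n (vsub x y)) ^ 2.
Definition is_subgrad (n : nat) (S : vec -> Prop) (F : vec -> R) (x h : vec) : Prop :=
  forall z, S z -> F z >= F x + inner n h (vsub z x).
Definition has_gradient_at (n : nat) (F : vec -> R) (gF : vec -> vec) (x : vec) : Prop :=
  forall eps, eps > 0 -> exists del, del > 0 /\
    forall y, inRn n y -> vnorm n (vsub y x) < del ->
      Rabs (F y - F x - inner n (gF x) (vsub y x)) <= eps * vnorm n (vsub y x).
Definition continuous_map_on (n : nat) (S : vec -> Prop) (G : vec -> vec) : Prop :=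
  forall x eps, S x -> eps > 0 -> exists del, del > 0 /\
    forall y, S y -> vnorm n (vsub y x) < del -> vnorm n (vsub (G y) (G x)) < eps.

Definition bregman (n : nat) (omega : vec -> R) (gomega : vec -> vec) (x z : vec) : R :=
  omega z - omega x - inner n (gomega x) (vsub z x).
Definition is_prox (n : nat) (X : vec -> Prop) (omega : vec -> R) (gomega : vec -> vec)
    (x y z : vec) : Prop :=
  X z /\ forall w, X w ->
    inner n y z + bregman n omega gomega x z <= inner n y w + bregman n omega gomega x w.

Definition Rleb (a b : R) : bool := if Rle_dec a b then true else false.
Definition lsum (F : nat -> R) (l : list nat) : R := fold_right (fun k acc => F k + acc) 0 l.
(* A_1 = 1, A_k = (1 - a_k) A_{k-1} for k >= 2 (A_0 unused) *)
Fixpoint Aseq (a : nat -> R) (k : nat) : R :=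
  match k with
  | O => 1
  | S O => 1
  | S k' => (1 - a k) * Aseq a k'
  end.

From Stdlib Require Import Reals List Lia Lra FunctionalExtensionality.
Open Scope R_scope.

(* One prox step satisfies the three-point inequality
     gam <h, x_k - xstar> <= gam^2 |h|^2 / 2 + V(x_k, xstar) - V(x_{k+1}, xstar),
   and strong convexity of the function whose subgradient is h, together with
   V <= L/2 |.|^2, turns it into
     gam_k E_k <= (1 - a_k) V(x_k, xstar) - V(x_{k+1}, xstar) + gam_k^2 C_k / 2,
   where E_k = f(x_k) - f(xstar) on productive steps and E_k = eta_k otherwise (there
   g(x_k, delta_k) > eta_k while g(xstar, delta_k) <= 0), and C_k is the squared
   Lipschitz constant.  Dividing by A_k, the identity (1 - a_k) / A_k = 1 / A_{k-1}
   makes the sum over I telescope, so sum_B rho_k E_k + sum_N rho_k eta_k is at most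
   the right-hand side of the hypothesis.  If |B| < (N - s + 1)/2 then
   |N| >= ceil((N - s + 1)/2), so sum_N rho_k eta_k alone exceeds that bound and
   sum_B rho_k E_k < 0; in particular B is nonempty. *)

Lemma inner_sub_r n x y z : inner n x (vsub y z) = inner n x y - inner n x z.
Proof.
  unfold inner, vsub; induction (seq 0 n) as [|i l IH]; simpl; [ring | rewrite IH; ring].
Qed.

Lemma inner_sub_l n x y z : inner n (vsub y z) x = inner n y x - inner n z x.
Proof.
  unfold inner, vsub; induction (seq 0 n) as [|i l IH]; simpl; [ring | rewrite IH; ring].
Qed.

Lemma inner_scal_r n c x y : inner n x (vscale c y) = c * inner n x y.
Proof.
  unfold inner, vscale; induction (seq 0 n) as [|i l IH]; simpl; [ring | rewrite IH; ring].
Qed.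

Lemma inner_scal_l n c x y : inner n (vscale c x) y = c * inner n x y.
Proof.
  unfold inner, vscale; induction (seq 0 n) as [|i l IH]; simpl; [ring | rewrite IH; ring].
Qed.

Lemma inner_sym n x y : inner n x y = inner n y x.
Proof.
  unfold inner; induction (seq 0 n) as [|i l IH]; simpl; [ring | rewrite IH; ring].
Qed.

Lemma inner_self_nonneg n x : 0 <= inner n x x.
Proof.
  unfold inner; induction (seq 0 n) as [|i l IH]; simpl; nra.
Qed.

Lemma inner_ext n x y x' y' :
  (forall i, (i < n)%nat -> x i * y i = x' i * y' i) -> inner n x y = inner n x' y'.
Proof.
  intros H. unfold inner.
  assert (Hseq : forall i, In i (seq 0 n) -> x i * y i = x' i * y' i)
    by (intros i Hi; apply in_seq in Hi; apply H; lia).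
  revert Hseq; induction (seq 0 n) as [|i l IH]; simpl; intros Hseq; [reflexivity|].
  rewrite Hseq, IH; auto.
Qed.

Lemma vnorm_nonneg n x : 0 <= vnorm n x.
Proof. apply sqrt_pos. Qed.

Lemma vnorm_sq n x : vnorm n x ^ 2 = inner n x x.
Proof. apply pow2_sqrt, inner_self_nonneg. Qed.

Lemma vnorm_scal n c x : 0 <= c -> vnorm n (vscale c x) = c * vnorm n x.
Proof.
  intros Hc. unfold vnorm. rewrite inner_scal_l, inner_scal_r, <- Rmult_assoc.
  rewrite sqrt_mult_alt by nra. rewrite sqrt_square by lra. reflexivity.
Qed.

Lemma vnorm_sub_sym n x y : vnorm n (vsub x y) = vnorm n (vsub y x).
Proof.
  unfold vnorm. f_equal. apply inner_ext. intros i _. unfold vsub. ring.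
Qed.

Lemma vsub_vcomb t z x : vsub (vcomb t z x) x = vscale t (vsub z x).
Proof. apply functional_extensionality; intro i. unfold vsub, vcomb, vscale. ring. Qed.

Lemma Rabs_le_bounds a b : Rabs a <= b -> - b <= a <= b.
Proof. unfold Rabs; destruct (Rcase_abs a); lra. Qed.

Lemma subgrad_sq_le_lipschitz n F y h Lc :
  inRn n y -> is_subgrad n (inRn n) F y h -> lipschitz_on n (inRn n) F Lc ->
  inner n h h <= Lc ^ 2.
Proof.
  intros Hy Hsub Hlip.
  (* Compare the subgradient and Lipschitz inequalities at y + h, with h cut off to its
     first n coordinates so that the point stays in R^n: |h|^2 <= Lc |h|. *)
  set (u := fun i => if Nat.ltb i n then h i else 0).
  set (z := fun i => y i + u i).
  assert (Hz : inRn n z).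
  { intros i Hi. unfold z, u. rewrite Hy by lia. destruct (Nat.ltb_spec i n); [lia | ring]. }
  assert (Hzy : vsub z y = u).
  { apply functional_extensionality; intro i. unfold vsub, z. ring. }
  assert (Hhu : inner n h u = inner n h h).
  { apply inner_ext. intros i Hi. unfold u. destruct (Nat.ltb_spec i n); [reflexivity | lia]. }
  assert (Huu : inner n u u = inner n h h).
  { apply inner_ext. intros i Hi. unfold u. destruct (Nat.ltb_spec i n); [reflexivity | lia]. }
  specialize (Hsub z Hz). rewrite Hzy, Hhu in Hsub.
  specialize (Hlip z y Hz Hy). rewrite Hzy in Hlip. unfold vnorm in Hlip. rewrite Huu in Hlip.
  apply Rabs_le_bounds in Hlip.
  pose proof (sqrt_pos (inner n h h)) as Hr.
  pose proof (sqrt_sqrt (inner n h h) (inner_self_nonneg n h)) as Hrr.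
  set (r := sqrt (inner n h h)) in *.
  assert (Hle : r * r <= Lc * r) by lra.
  destruct (Rle_lt_dec r 0); nra.
Qed.

Section Prox.

Variables (n : nat) (X : vec -> Prop) (omega : vec -> R) (gomega : vec -> vec).
Hypothesis X_in_Rn : forall y, X y -> inRn n y.
Hypothesis X_convex : convex_set X.
Hypothesis omega_grad : forall y, X y -> has_gradient_at n omega gomega y.
Hypothesis omega_sc : strongly_convex_on n X omega 1.

Lemma gradient_directional_estimate x z eps tau :
  X x -> X z -> eps > 0 -> tau > 0 ->
  exists t, 0 < t <= 1 /\ t <= tau /\
    Rabs (omega (vcomb t z x) - omega x - t * inner n (gomega x) (vsub z x))
      <= eps * t * vnorm n (vsub z x).
Proof.
  intros Hx Hz Heps Htau.
  destruct (omega_grad x Hx eps Heps) as [del [Hdel Hclose]].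
  set (r := vnorm n (vsub z x)).
  assert (Hr : 0 <= r) by apply vnorm_nonneg.
  assert (Hq : del / (r + 1) > 0) by (apply Rdiv_lt_0_compat; lra).
  set (t := Rmin 1 (Rmin tau (del / (r + 1)))).
  assert (Ht1 : t <= 1) by apply Rmin_l.
  assert (Ht2 : t <= tau) by (eapply Rle_trans; [apply Rmin_r | apply Rmin_l]).
  assert (Ht3 : t <= del / (r + 1)) by (eapply Rle_trans; [apply Rmin_r | apply Rmin_r]).
  assert (Ht0 : 0 < t) by (unfold t; repeat apply Rmin_pos; lra).
  exists t. split; [lra | split; [lra |]].
  assert (Hmove : t * r < del).
  { assert (del / (r + 1) * (r + 1) = del) by (field; lra).
    assert (t * r <= del / (r + 1) * r) by (apply Rmult_le_compat_r; lra). nra. }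
  assert (Hxt : X (vcomb t z x)) by (apply X_convex; auto; lra).
  specialize (Hclose (vcomb t z x) (X_in_Rn _ Hxt)).
  rewrite vsub_vcomb, vnorm_scal, inner_scal_r in Hclose by lra.
  replace (eps * t * r) with (eps * (t * r)) by ring. apply Hclose. fold r. lra.
Qed.

Lemma bregman_ge_half_sq x z :
  X x -> X z -> 1 / 2 * inner n (vsub z x) (vsub z x) <= bregman n omega gomega x z.
Proof.
  intros Hx Hz.
  rewrite <- vnorm_sq. set (r := vnorm n (vsub z x)).
  assert (Hr : 0 <= r) by apply vnorm_nonneg.
  set (V := bregman n omega gomega x z).
  destruct (Rle_lt_dec (1 / 2 * r ^ 2) V) as [| Hlt]; [lra | exfalso].
  (* Strong convexity along [x, z] and the expansion of omega at x give
     V >= (1 - t) r^2 / 2 - eps r for some small t > 0; eps and tau are chosen to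
     beat the gap. *)
  set (gap := 1 / 2 * r ^ 2 - V).
  set (eps := gap / (2 * (r + 1))). set (tau := gap / (r * r + 1)).
  assert (Heps : eps > 0) by (apply Rdiv_lt_0_compat; unfold gap; lra).
  assert (Htau : tau > 0) by (apply Rdiv_lt_0_compat; unfold gap; nra).
  destruct (gradient_directional_estimate x z eps tau Hx Hz Heps Htau) as [t [Ht [Httau Hest]]].
  fold r in Hest. apply Rabs_le_bounds in Hest.
  pose proof (omega_sc z x t Hz Hx ltac:(lra)) as Hsc. fold r in Hsc.
  assert (HV : V = omega z - omega x - inner n (gomega x) (vsub z x)) by reflexivity.
  assert (Hk : t * V >= t * (1 / 2 * (1 - t) * r ^ 2 - eps * r)) by nra.
  assert (Hk2 : V >= 1 / 2 * (1 - t) * r ^ 2 - eps * r).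
  { apply Rle_ge, (Rmult_le_reg_l t); lra. }
  assert (E1 : eps * (2 * (r + 1)) = gap) by (unfold eps; field; lra).
  assert (E2 : tau * (r * r + 1) = gap) by (unfold tau; field; nra).
  assert (t * r ^ 2 <= tau * r ^ 2) by (apply Rmult_le_compat_r; nra).
  unfold gap in *. nra.
Qed.

Lemma prox_optimality x y z w :
  is_prox n X omega gomega x y z -> X w ->
  0 <= inner n y (vsub w z) + inner n (gomega z) (vsub w z) - inner n (gomega x) (vsub w z).
Proof.
  intros [Hz Hmin] Hw.
  set (D := inner n y (vsub w z) + inner n (gomega z) (vsub w z)
            - inner n (gomega x) (vsub w z)).
  destruct (Rle_lt_dec 0 D) as [| Hlt]; [lra | exfalso].
  (* D is the derivative at t = 0 of the prox objective along [z, w], so D < 0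
     contradicts minimality of z. *)
  set (r := vnorm n (vsub w z)).
  assert (Hr : 0 <= r) by apply vnorm_nonneg.
  set (eps := - D / (2 * (r + 1))).
  assert (Heps : eps > 0) by (apply Rdiv_lt_0_compat; lra).
  destruct (gradient_directional_estimate z w eps 1 Hz Hw Heps ltac:(lra))
    as [t [Ht [_ Hest]]].
  fold r in Hest. apply Rabs_le_bounds in Hest.
  set (u := vcomb t w z).
  assert (Hu : X u) by (apply X_convex; auto; lra).
  specialize (Hmin u Hu). unfold bregman in Hmin.
  assert (Hs : vsub u z = vscale t (vsub w z)) by apply vsub_vcomb.
  assert (Ey : inner n y u - inner n y z = t * inner n y (vsub w z)).
  { rewrite <- inner_sub_r, Hs, inner_scal_r. reflexivity. }
  assert (Eg : inner n (gomega x) u - inner n (gomega x) z = t * inner n (gomega x) (vsub w z)).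
  { rewrite <- inner_sub_r, Hs, inner_scal_r. reflexivity. }
  rewrite !inner_sub_r in Hmin.
  assert (E1 : eps * (2 * (r + 1)) = - D) by (unfold eps; field; lra).
  assert (Hk : 0 <= t * (D + eps * r)) by (unfold D; fold u in Hest; nra).
  assert (D + eps * r < 0) by nra.
  nra.
Qed.

Lemma prox_three_point x y z w :
  X x -> X w -> is_prox n X omega gomega x y z ->
  inner n y (vsub x w)
    <= 1 / 2 * inner n y y + bregman n omega gomega x w - bregman n omega gomega z w.
Proof.
  intros Hx Hw Hprox.
  assert (Hz : X z) by apply Hprox.
  pose proof (prox_optimality x y z w Hprox Hw) as Hopt.
  pose proof (bregman_ge_half_sq x z Hx Hz) as Hbreg.
  (* Young: <y, x - z> <= |y|^2 / 2 + |x - z|^2 / 2. *)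
  pose proof (inner_self_nonneg n (vsub y (vsub x z))) as Hyoung.
  unfold bregman in *.
  rewrite !inner_sub_l, !inner_sub_r in Hyoung.
  rewrite !inner_sub_r in Hopt |- *. rewrite !inner_sub_r, !inner_sub_l in Hbreg.
  rewrite (inner_sym n x y), (inner_sym n z y), (inner_sym n z x) in Hyoung.
  rewrite (inner_sym n z x) in Hbreg.
  lra.
Qed.

Lemma prox_step_descent (phi : vec -> R) (h : vec) (Lc mu L gam : R) x x' z :
  X x -> X z ->
  is_subgrad n (inRn n) phi x h -> lipschitz_on n (inRn n) phi Lc ->
  phi z >= phi x + inner n h (vsub z x) + mu / 2 * vnorm n (vsub z x) ^ 2 ->
  bregman n omega gomega x z <= L / 2 * vnorm n (vsub x z) ^ 2 ->
  0 <= mu -> L > 0 -> gam > 0 ->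
  is_prox n X omega gomega x (vscale gam h) x' ->
  gam * (phi x - phi z)
    <= (1 - mu * gam / L) * bregman n omega gomega x z - bregman n omega gomega x' z
       + gam ^ 2 * Lc ^ 2 / 2.
Proof.
  intros Hx Hz Hsub Hlip Hsc HL Hmu HLpos Hgam Hprox.
  pose proof (prox_three_point x _ x' z Hx Hz Hprox) as H3.
  rewrite !inner_scal_l, !inner_scal_r in H3.
  pose proof (subgrad_sq_le_lipschitz n phi x h Lc (X_in_Rn x Hx) Hsub Hlip) as Hh.
  rewrite vnorm_sub_sym in HL.
  set (r2 := vnorm n (vsub z x) ^ 2) in *.
  assert (Hdir : inner n h (vsub z x) = - inner n h (vsub x z)) by (rewrite !inner_sub_r; ring).
  assert (Hbreg : mu * gam / L * bregman n omega gomega x z <= gam * (mu / 2 * r2)).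
  { replace (gam * (mu / 2 * r2)) with (mu * gam / L * (L / 2 * r2)) by (field; lra).
    apply Rmult_le_compat_l; [| exact HL].
    apply Rmult_le_pos; [nra | apply Rlt_le, Rinv_0_lt_compat; lra]. }
  assert (Hgrad2 : gam * (gam * inner n h h) <= gam * (gam * Lc ^ 2)).
  { apply Rmult_le_compat_l; [lra|]. apply Rmult_le_compat_l; lra. }
  assert (Hval : gam * (phi x - phi z) <= gam * (inner n h (vsub x z) - mu / 2 * r2)).
  { apply Rmult_le_compat_l; lra. }
  lra.
Qed.

End Prox.

Lemma lsum_app F l1 l2 : lsum F (l1 ++ l2) = lsum F l1 + lsum F l2.
Proof. induction l1 as [|k l IH]; simpl; [ring | rewrite IH; ring].
Qed.

Lemma lsum_nonneg F l : (forall k, In k l -> 0 <= F k) -> 0 <= lsum F l.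
Proof.
  induction l as [|k l IH]; simpl; intros H; [lra|].
  pose proof (H k (or_introl eq_refl)). pose proof (IH (fun j Hj => H j (or_intror Hj))). lra.
Qed.

Lemma lsum_filter_split (p : nat -> bool) H F G l :
  (forall k, In k l -> H k = if p k then F k else G k) ->
  lsum H l = lsum F (filter p l) + lsum G (filter (fun k => negb (p k)) l).
Proof.
  induction l as [|k l IH]; simpl; intros Hpt; [ring|].
  rewrite Hpt, IH by auto. destruct (p k); simpl; ring.
Qed.

Lemma lsum_firstn_le (w : nat -> R) (l : list nat) c :
  (forall k, In k l -> 0 <= w k) -> lsum w (firstn c l) <= lsum w l.
Proof.
  intros Hw. rewrite <- (firstn_skipn c l) at 2. rewrite lsum_app.
  enough (0 <= lsum w (skipn c l)) by lra.
  apply lsum_nonneg. intros k Hk. apply Hw.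
  rewrite <- (firstn_skipn c l). apply in_or_app; auto.
Qed.

Lemma lsum_gt_of_sublists (w : nat -> R) (I l : list nat) (c : nat) (b : R) :
  NoDup l -> incl l I -> (c <= length l)%nat -> (forall k, In k l -> 0 <= w k) ->
  (forall S, NoDup S -> incl S I -> length S = c -> lsum w S > b) ->
  lsum w l > b.
Proof.
  intros Hnd Hincl Hc Hw Hsub.
  pose proof (lsum_firstn_le w l c Hw).
  enough (lsum w (firstn c l) > b) by lra.
  apply Hsub.
  - apply (NoDup_app_remove_r _ (skipn c l)). rewrite firstn_skipn. exact Hnd.
  - intros k Hk. apply Hincl. rewrite <- (firstn_skipn c l). apply in_or_app; auto.
  - apply firstn_length_le, Hc.
Qed.

Lemma filter_large_or_sum_neg (p : nat -> bool) (u w : nat -> R) (I : list nat) (c : nat) (b : R) :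
  NoDup I -> (1 <= length I)%nat -> (2 * c <= length I + 1)%nat ->
  (forall k, In k I -> 0 <= w k) ->
  lsum u (filter p I) + lsum w (filter (fun k => negb (p k)) I) <= b ->
  (forall S, NoDup S -> incl S I -> length S = c -> lsum w S > b) ->
  filter p I <> nil /\
  (INR (length (filter p I)) >= INR (length I) / 2 \/ lsum u (filter p I) < 0).
Proof.
  intros Hnd HI Hc Hw Hsum Hsub.
  pose proof (filter_length p I) as Hlen.
  assert (Hfew : (2 * length (filter p I) < length I)%nat -> lsum u (filter p I) < 0).
  { intros Hsmall.
    enough (lsum w (filter (fun k => negb (p k)) I) > b) by lra.
    apply (lsum_gt_of_sublists w I _ c b); auto.
    - apply NoDup_filter, Hnd.
    - intros k Hk. apply filter_In in Hk. tauto.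
    - lia.
    - intros k Hk. apply filter_In in Hk. apply Hw. tauto. }
  split.
  - intros HB. pose proof Hfew as Hneg. rewrite HB in Hneg. simpl in Hneg.
    assert (0 < 0) by (apply Hneg; lia). lra.
  - destruct (Rle_lt_dec (INR (length I) / 2) (INR (length (filter p I)))); [left; lra | right].
    apply Hfew. apply INR_lt. rewrite mult_INR. simpl (INR 2). lra.
Qed.

Lemma Aseq_succ a k : (1 <= k)%nat -> Aseq a (S k) = (1 - a (S k)) * Aseq a k.
Proof. destruct k; [lia | reflexivity]. Qed.

Lemma weighted_telescoping (a gam E C V : nat -> R) (s N : nat) :
  (1 <= s <= N)%nat ->
  (forall k, (s <= k <= N)%nat -> Aseq a k > 0) ->
  (forall k, (s <= k <= N)%nat ->
     gam k * E k <= (1 - a k) * V k - V (S k) + gam k ^ 2 * C k / 2) ->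
  0 <= V (S N) ->
  lsum (fun k => gam k / Aseq a k * E k) (seq s (N - s + 1))
    <= (1 - a s) * V s / Aseq a s
       + 1 / 2 * lsum (fun k => gam k / Aseq a k * gam k * C k) (seq s (N - s + 1)).
Proof.
  intros Hs HA Hstep HVN.
  set (T := fun k => gam k / Aseq a k * E k).
  set (Q := fun k => gam k / Aseq a k * gam k * C k).
  assert (Hscaled : forall k, (s <= k <= N)%nat ->
    T k <= (1 - a k) * V k / Aseq a k - V (S k) / Aseq a k + 1 / 2 * Q k).
  { intros k Hk. specialize (HA k Hk). specialize (Hstep k Hk). unfold T, Q.
    replace (gam k / Aseq a k * E k) with (gam k * E k * / Aseq a k) by (field; lra).
    replace ((1 - a k) * V k / Aseq a k - V (S k) / Aseq a k
             + 1 / 2 * (gam k / Aseq a k * gam k * C k))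
      with (((1 - a k) * V k - V (S k) + gam k ^ 2 * C k / 2) * / Aseq a k) by (field; lra).
    apply Rmult_le_compat_r; [apply Rlt_le, Rinv_0_lt_compat |]; lra. }
  (* Since A_k = (1 - a_k) A_{k-1}, the term (1 - a_k) V_k / A_k cancels V_k / A_{k-1}. *)
  assert (Hpartial : forall m, (s + m <= N)%nat ->
    lsum T (seq s (S m))
      <= (1 - a s) * V s / Aseq a s - V (S (s + m)) / Aseq a (s + m)
         + 1 / 2 * lsum Q (seq s (S m))).
  { induction m as [|m IH]; intros Hm.
    - simpl. rewrite Nat.add_0_r. pose proof (Hscaled s ltac:(lia)). lra.
    - rewrite seq_S, !lsum_app. simpl (lsum _ (_ :: nil)).
      set (k := (s + S m)%nat).
      pose proof (IH ltac:(lia)) as IHm.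
      replace (S (s + m)) with k in IHm by lia.
      pose proof (Hscaled k ltac:(lia)) as Hk.
      pose proof (HA k ltac:(lia)). pose proof (HA (s + m)%nat ltac:(lia)).
      assert (HAk : Aseq a k = (1 - a k) * Aseq a (s + m)).
      { replace k with (S (s + m)) by lia. apply Aseq_succ. lia. }
      assert (1 - a k <> 0) by (intro E0; rewrite E0, Rmult_0_l in HAk; lra).
      assert (Hcancel : (1 - a k) * V k / Aseq a k = V k / Aseq a (s + m))
        by (rewrite HAk; field; lra).
      lra. }
  replace (N - s + 1)%nat with (S (N - s)) by lia.
  pose proof (Hpartial (N - s)%nat ltac:(lia)) as Hall.
  replace (s + (N - s))%nat with N in Hall by lia.
  assert (0 <= V (S N) / Aseq a N).
  { apply Rmult_le_pos; [lra | apply Rlt_le, Rinv_0_lt_compat, HA; lia]. }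
  lra.
Qed.

Lemma csa_certificate (test : nat -> bool) (a gam eta F V : nat -> R) (cf cg D : R) (s N : nat) :
  (1 <= s <= N)%nat ->
  (forall k, (s <= k <= N)%nat -> Aseq a k > 0) -> a s <= 1 ->
  (forall k, (s <= k <= N)%nat -> 0 <= eta k /\ 0 < gam k) ->
  (forall k, (s <= k <= N)%nat ->
     gam k * (if test k then F k else eta k)
       <= (1 - a k) * V k - V (S k) + gam k ^ 2 * (if test k then cf else cg) / 2) ->
  0 <= V (S N) -> V s <= D ->
  let rho k := gam k / Aseq a k in
  let I := seq s (N - s + 1) in
  let B := filter test I in
  let NN := filter (fun k => negb (test k)) I in
  (forall Asub : list nat, NoDup Asub -> incl Asub I ->
     length Asub = Nat.div (N - s + 2) 2 ->
     lsum (fun k => rho k * eta k) Asub >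
       (1 - a s) * D / Aseq a s
       + 1 / 2 * lsum (fun k => rho k * gam k * cf) B
       + 1 / 2 * lsum (fun k => rho k * gam k * cg) NN) ->
  B <> nil /\
  (INR (length B) >= INR (N - s + 1) / 2 \/ lsum (fun k => rho k * F k) B < 0).
Proof.
  intros Hs HA Has Hpos Hstep HVend HVs rho I B NN Hsubsets.
  pose proof (weighted_telescoping a gam (fun k => if test k then F k else eta k)
    (fun k => if test k then cf else cg) V s N Hs HA Hstep HVend) as Hsum.
  fold I in Hsum.
  assert (HsplitE : lsum (fun k => gam k / Aseq a k * (if test k then F k else eta k)) I
      = lsum (fun k => rho k * F k) B + lsum (fun k => rho k * eta k) NN)
    by (apply lsum_filter_split; intros k _; destruct (test k); reflexivity).
  assert (HsplitC : lsum (fun k => gam k / Aseq a k * gam k * (if test k then cf else cg)) I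
      = lsum (fun k => rho k * gam k * cf) B + lsum (fun k => rho k * gam k * cg) NN)
    by (apply lsum_filter_split; intros k _; destruct (test k); reflexivity).
  assert (HVD : (1 - a s) * V s / Aseq a s <= (1 - a s) * D / Aseq a s).
  { pose proof (HA s ltac:(lia)). unfold Rdiv.
    apply Rmult_le_compat_r; [apply Rlt_le, Rinv_0_lt_compat; lra |].
    apply Rmult_le_compat_l; lra. }
  replace (N - s + 1)%nat with (length I) by apply length_seq.
  apply (filter_large_or_sum_neg test _ (fun k => rho k * eta k) I ((N - s + 2) / 2)
           ((1 - a s) * D / Aseq a s + 1 / 2 * lsum (fun k => rho k * gam k * cf) B
            + 1 / 2 * lsum (fun k => rho k * gam k * cg) NN)).
  - apply seq_NoDup.
  - unfold I. rewrite length_seq. lia.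
  - unfold I. rewrite length_seq. pose proof (Nat.Div0.mul_div_le (N - s + 2) 2). lia.
  - intros k Hk. apply in_seq in Hk.
    destruct (Hpos k ltac:(lia)). pose proof (HA k ltac:(lia)).
    apply Rmult_le_pos; [apply Rlt_le, Rdiv_lt_0_compat |]; lra.
  - fold B NN. lra.
  - exact Hsubsets.
Qed.

Section InexactCSAStep.

Variables (n : nat) (X Delta : vec -> Prop) (omega : vec -> R) (gomega : vec -> vec)
  (f : vec -> R) (g : vec -> vec -> R) (fsub : vec -> vec) (gsub : vec -> vec -> vec)
  (xstar : vec) (Lf LgX mu_f mu_g L : R).
Hypothesis X_in_Rn : forall y, X y -> inRn n y.
Hypothesis X_convex : convex_set X.
Hypothesis omega_grad : forall y, X y -> has_gradient_at n omega gomega y.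
Hypothesis omega_sc : strongly_convex_on n X omega 1.
Hypothesis f_lip : lipschitz_on n (inRn n) f Lf.
Hypothesis g_lip : forall dd, Delta dd -> lipschitz_on n (inRn n) (fun y => g y dd) LgX.
Hypothesis f_subgrad : forall y, X y -> is_subgrad n (inRn n) f y (fsub y).
Hypothesis g_subgrad :
  forall y dd, X y -> Delta dd -> is_subgrad n (inRn n) (fun z => g z dd) y (gsub y dd).
Hypothesis f_strong : forall y z, X y -> X z ->
  f y >= f z + inner n (fsub z) (vsub y z) + mu_f / 2 * vnorm n (vsub y z) ^ 2.
Hypothesis g_strong : forall dd y z, Delta dd -> X y -> X z ->
  g y dd >= g z dd + inner n (gsub z dd) (vsub y z) + mu_g / 2 * vnorm n (vsub y z) ^ 2.
Hypothesis bregman_le_sq : forall y z, X y -> X z ->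
  bregman n omega gomega y z <= L / 2 * vnorm n (vsub y z) ^ 2.
Hypothesis xstar_in_X : X xstar.
Hypothesis xstar_feasible : forall dd, Delta dd -> g xstar dd <= 0.
Hypotheses (mu_f_nonneg : 0 <= mu_f) (mu_g_nonneg : 0 <= mu_g) (L_pos : L > 0).

Lemma inexact_csa_step y y' dd eta gam :
  X y -> Delta dd -> gam > 0 ->
  let b := Rleb (g y dd) eta in
  is_prox n X omega gomega y (vscale gam (if b then fsub y else gsub y dd)) y' ->
  gam * (if b then f y - f xstar else eta)
    <= (1 - (if b then mu_f * gam / L else mu_g * gam / L)) * bregman n omega gomega y xstar
       - bregman n omega gomega y' xstar + gam ^ 2 * (if b then Lf ^ 2 else LgX ^ 2) / 2.
Proof.
  intros Hy Hdd Hgam b Hprox. unfold b in *. destruct (Rleb (g y dd) eta) eqn:Htest.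
  - eapply prox_step_descent with (phi := f); eauto.
  - assert (Hviol : g y dd > eta).
    { unfold Rleb in Htest. destruct (Rle_dec _ _); [discriminate | lra]. }
    pose proof (xstar_feasible dd Hdd).
    eapply Rle_trans; [| eapply prox_step_descent with (phi := fun z => g z dd); eauto].
    apply Rmult_le_compat_l; lra.
Qed.

End InexactCSAStep.

Theorem mainTheorem19
  (n d : nat) (X Delta : vec -> Prop) (f : vec -> R) (g : vec -> vec -> R)
  (Lf LgX LgD : R) (fsub : vec -> vec) (gsub : vec -> vec -> vec) (xstar : vec)
  (omega : vec -> R) (gomega : vec -> vec) (MV DX : R)
  (N s : nat) (x dl : nat -> vec) (eta gam : nat -> R) (mu_f mu_g L : R) :
  (* Setting *)
  convex_set X -> compact_set n X ->
  convex_on (inRn n) f -> lipschitz_on n (inRn n) f Lf ->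
  compact_set d Delta ->
  (forall dd, Delta dd -> convex_on (inRn n) (fun y => g y dd)) ->
  (forall dd, Delta dd -> lipschitz_on n (inRn n) (fun y => g y dd) LgX) ->
  (forall y, X y -> lipschitz_on d Delta (fun dd => g y dd) LgD) ->
  (* x* is an optimal solution of min { f(x) : x in X, G(x) = max_delta g(x,delta) <= 0 } *)
  X xstar -> (forall dd, Delta dd -> g xstar dd <= 0) ->
  (forall y, X y -> (forall dd, Delta dd -> g y dd <= 0) -> f xstar <= f y) ->
  (* subgradients f'(x), g'(x,delta) *)
  (forall y, X y -> is_subgrad n (inRn n) f y (fsub y)) ->
  (forall y dd, X y -> Delta dd -> is_subgrad n (inRn n) (fun z => g z dd) y (gsub y dd)) ->
  (* distance generating function omega *)
  (forall y, X y -> has_gradient_at n omega gomega y) ->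
  continuous_map_on n X gomega ->
  strongly_convex_on n X omega 1 ->
  (* D_X = sqrt (max_{x,z in X} V(x,z)) *)
  (forall y z, X y -> X z -> bregman n omega gomega y z <= MV) ->
  (exists y z, X y /\ X z /\ bregman n omega gomega y z = MV) ->
  DX = sqrt MV ->
  let test k := Rleb (g (x k) (dl k)) (eta k) in
  let h k := if test k then fsub (x k) else gsub (x k) (dl k) in
  (* Algorithm (inexact CSA) *)
  (1 <= N)%nat -> X (x 1%nat) ->
  (forall k, (1 <= k <= N)%nat ->
     Delta (dl k) /\ eta k > 0 /\ gam k > 0 /\
     is_prox n X omega gomega (x k) (vscale (gam k) (h k)) (x (S k))) ->
  (* Strong convexity assumption *)
  mu_f > 0 -> mu_g > 0 -> L > 0 ->
  (forall y z, X y -> X z ->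
     f y >= f z + inner n (fsub z) (vsub y z) + mu_f / 2 * (vnorm n (vsub y z)) ^ 2) ->
  (forall dd y z, Delta dd -> X y -> X z ->
     g y dd >= g z dd + inner n (gsub z dd) (vsub y z) + mu_g / 2 * (vnorm n (vsub y z)) ^ 2) ->
  (forall y z, X y -> X z -> bregman n omega gomega y z <= L / 2 * (vnorm n (vsub y z)) ^ 2) ->
  let a k := if test k then mu_f * gam k / L else mu_g * gam k / L in
  let A := Aseq a in
  let rho k := gam k / A k in
  (forall k, (1 <= k <= N)%nat -> 0 < a k <= 1 /\ A k > 0) ->
  (* the index sets *)
  (1 <= s <= N)%nat ->
  let I := seq s (N - s + 1) in
  let B := filter test I in
  let NN := filter (fun k => negb (test k)) I in
  (* min over subsets of I of size ceil((N-s+1)/2) exceeds the bound *)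
  (forall Asub : list nat, NoDup Asub -> incl Asub I ->
     length Asub = Nat.div (N - s + 2) 2 ->
     lsum (fun k => rho k * eta k) Asub >
       (1 - a s) * DX ^ 2 / A s
       + 1 / 2 * lsum (fun k => rho k * gam k * Lf ^ 2) B
       + 1 / 2 * lsum (fun k => rho k * gam k * LgX ^ 2) NN) ->
  B <> nil /\
  (INR (length B) >= INR (N - s + 1) / 2 \/
   lsum (fun k => rho k * (f (x k) - f xstar)) B < 0).
Proof.
  intros HXconv HXcomp _ Hf_lip _ _ Hg_lip _ Hxstar Hg_xstar _ Hf_sub Hg_sub Hgrad _ Hom_sc
    Hbreg_max _ HDX test h _ Hx1 Halg Hmu_f Hmu_g HL Hf_sc Hg_sc Hbreg_L a A rho HaA Hs.
  assert (Hin : forall y, X y -> inRn n y) by apply HXcomp.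
  assert (Hiter : forall k, (1 <= k <= S N)%nat -> X (x k)).
  { intros [|[|k]] Hk; [lia | exact Hx1 | apply (Halg (S k)); lia]. }
  assert (HMV : 0 <= MV).
  { pose proof (Hbreg_max xstar xstar Hxstar Hxstar) as Hdiag.
    unfold bregman in Hdiag. rewrite inner_sub_r in Hdiag. lra. }
  apply (csa_certificate test a gam eta (fun k => f (x k) - f xstar)
           (fun k => bregman n omega gomega (x k) xstar) (Lf ^ 2) (LgX ^ 2) (DX ^ 2) s N Hs).
  - intros k Hk. apply HaA. lia.
  - apply HaA. lia.
  - intros k Hk. destruct (Halg k ltac:(lia)) as (_ & Heta & Hgam & _). lra.
  - intros k Hk. destruct (Halg k ltac:(lia)) as (Hdl & _ & Hgam & Hprox).
    eapply inexact_csa_step; eauto; [lra | lra | apply Hiter; lia].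
  - pose proof (bregman_ge_half_sq n X omega gomega Hin HXconv Hgrad Hom_sc (x (S N)) xstar
      (Hiter (S N) ltac:(lia)) Hxstar).
    pose proof (inner_self_nonneg n (vsub xstar (x (S N)))). lra.
  - rewrite HDX, pow2_sqrt by exact HMV. apply Hbreg_max; [apply Hiter; lia | exact Hxstar].
Qed.
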